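(* Let $n\ge1$ and let $\sigma\in S_n\le B_n$ have disjoint cycle decomposition (including fixed points as cycles of length $1$) \[ C_1=(i_{1,1}\,\dots\,i_{1,d_1}),\ \dots,\ C_j=(i_{j,1}\,\dots\,i_{j,d_j}),\qquad \sum_{r=1}^j d_r=n. \] Let $\tau\in C_{B_n}(\sigma)$. Then there exist a unique $\tau'\in C_{S_n}(\sigma)$ and unique $\lambda_1,\dots,\lambda_j\in\mathbb Z/2\mathbb Z$ such that \[ \tau=\tau' v,\qquad v=\sum_{r=1}^j\lambda_r\,(e_{i_{r,1}}+\dots+e_{i_{r,d_r}}), \] and moreover \[ \phi(\sigma,\tau)=\epsilon^{\sum_{r=1}^j\lambda_r(d_r-1)}. \]
   Context: $B_n=(\mathbb Z/2\mathbb Z)^n\rtimes S_n$ is the hyperoctahedral group, $S_n$ acting by permuting coordinates; $e_i$ is the $i$th unit vector of $(\mathbb Z/2\mathbb Z)^n$; $C_{B_n}(\sigma)$ and $C_{S_n}(\sigma)$ denote centralizers. $H_n$ is the set of pairs $(a,b)\in(\mathbb Z/2\mathbb Z)^n\times\mathbb Z/2\mathbb Z$ with group law $(a_1,b_1)(a_2,b_2)=(a_1+a_2,\ b_1+b_2+\sum_{1\le i<j\le n}a_{1,i}a_{2,j})$; put $x_i=(e_i,0)$ and $\epsilon=(0,1)$. $S_n$ acts on $H_n$ by automorphisms via $\sigma(x_i)=x_{\sigma(i)}$, $\sigma(\epsilon)=\epsilon$, and $G_n=H_n\rtimes S_n$ (with $\sigma h\sigma^{-1}=\sigma(h)$). The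 element $\epsilon$ is central in $G_n$ and $G_n/\{1,\epsilon\}\cong B_n$ (via $x_i\mapsto e_i$, $\sigma\mapsto\sigma$). For commuting $\sigma,\tau\in B_n$ with lifts $\widetilde\sigma,\widetilde\tau\in G_n$, define $\phi(\sigma,\tau)=\widetilde\sigma\widetilde\tau\widetilde\sigma^{-1}\widetilde\tau^{-1}\in\langle\epsilon\rangle$, which is independent of the choice of lifts. *)

From HB Require Import structures.
From mathcomp Require Import all_boot all_order all_algebra all_fingroup.
Set Implicit Arguments. Unset Strict Implicit. Unset Printing Implicit Defensive.
Import GRing.Theory.
Local Open Scope ring_scope.

Definition vec (n : nat) := {ffun 'I_n -> 'Z_2}.
Definition unitv n (i : 'I_n) : vec n := [ffun k => (k == i)%:R].
Definition indic n (C : {set 'I_n}) : vec n := [ffun k => (k \in C)%:R].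
Definition vscale n (c : 'Z_2) (a : vec n) : vec n := [ffun k => c * a k].
(* S_n acts on (Z/2)^n by permuting coordinates: s(e_i) = e_{s i} *)
Definition pact n (s : 'S_n) (a : vec n) : vec n := [ffun k => a ((s^-1)%g k)].

(* B_n = (Z/2)^n x| S_n ; the pair (a, s) stands for the product a * s.
   Permutations compose as functions: the product s1 s2 is s1 o s2,
   which in mathcomp's convention is (s2 * s1)%g. *)
Definition Bn (n : nat) := (vec n * 'S_n)%type.
Definition bmul n (x y : Bn n) : Bn n := (x.1 + pact x.2 y.1, (y.2 * x.2)%g).
Definition bperm n (s : 'S_n) : Bn n := (0, s).
Definition bvec n (a : vec n) : Bn n := (a, 1%g).

Definition Hn (n : nat) := (vec n * 'Z_2)%type.
Definition hcross n (a1 a2 : vec n) : 'Z_2 :=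
  \sum_(i < n) \sum_(j < n | (i < j)%N) a1 i * a2 j.
Definition hmul n (h1 h2 : Hn n) : Hn n :=
  (h1.1 + h2.1, h1.2 + h2.2 + hcross h1.1 h2.1).
Definition hone n : Hn n := (0, 0).
Definition hinv n (h : Hn n) : Hn n := (- h.1, - h.2 + hcross h.1 h.1).
Definition xgen n (i : 'I_n) : Hn n := (unitv i, 0).
Definition heps n (k : 'Z_2) : Hn n := (0, k).
(* the word  x_{s i1}^{a_i1} x_{s i2}^{a_i2} ... x_{s ik}^{a_ik}  (i1 < ... < ik) *)
Definition hword n (s : 'S_n) (a : vec n) : Hn n :=
  foldr (fun i acc => hmul (if a i == 0 then hone n else xgen (s i)) acc)
        (hone n) (enum 'I_n).
(* action of S_n on H_n by the automorphisms x_i |-> x_{s i}, eps |-> eps: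
   (a,b) = eps^(b - c) * x_{i1}^{a_i1} ... x_{ik}^{a_ik} where (a,c) = hword 1 a,
   and s maps it to eps^(b - c) * x_{s i1}^{a_i1} ... x_{s ik}^{a_ik}. *)
Definition hact n (s : 'S_n) (h : Hn n) : Hn n :=
  hmul (heps n (h.2 - (hword 1%g h.1).2)) (hword s h.1).

(* G_n = H_n x| S_n ; the pair (h, s) stands for h * s *)
Definition Gn (n : nat) := (Hn n * 'S_n)%type.
Definition gmul n (g1 g2 : Gn n) : Gn n :=
  (hmul g1.1 (hact g1.2 g2.1), (g2.2 * g1.2)%g).
Definition ginv n (g : Gn n) : Gn n := (hact (g.2^-1)%g (hinv g.1), (g.2^-1)%g).
Definition gcomm n (g1 g2 : Gn n) : Gn n :=
  gmul (gmul (gmul g1 g2) (ginv g1)) (ginv g2).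
Definition geps n (k : 'Z_2) : Gn n := (heps n k, 1%g).
Definition lift n (x : Bn n) : Gn n := ((x.1, 0), x.2).
Definition phi n (s t : Bn n) : Gn n := gcomm (lift s) (lift t).

From HB Require Import structures.
From mathcomp Require Import all_boot all_order all_algebra all_fingroup.
From mathcomp Require Import ring.
Set Implicit Arguments.
Unset Strict Implicit.
Unset Printing Implicit Defensive.

Import GRing.Theory.
Local Open Scope ring_scope.

(* Write tau = (a, u): it commutes with sigma exactly when sigma fixes a and u
   commutes with sigma, and lambda records the value of u^-1 a on each
   sigma-orbit, where it is constant.  Computing with the normal form of words
   in H_n, the commutator of the lifts of sigma and tau is epsilon raised to the
   parity of the inversions of sigma among the coordinates where a is 1.  Since
   u commutes with sigma, this parity is unchanged when a is replaced by u^-1 a,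
   whose support S is a union of sigma-orbits; and the inversion parity of
   sigma on S is the sign of the restriction of sigma to S, that is, the sum of
   d_r - 1 over the orbits contained in S. *)

Lemma pchar2_Z2 : 2 \in [pchar 'Z_2].
Proof. by apply/andP; split => //; apply/eqP/val_inj. Qed.

Lemma Z2_eq01 (x : 'Z_2) : x = 0 \/ x = 1.
Proof. by case: x => [[|[|]]] //= Hx; [left|right]; apply/val_inj. Qed.

Lemma natr_Z2 (k : nat) : (k%:R : 'Z_2) = (odd k)%:R.
Proof. by rewrite -(GRing.natr_mod_pchar pchar2_Z2) modn2. Qed.

Lemma natr_addb_Z2 (b1 b2 : bool) : ((b1 (+) b2)%:R : 'Z_2) = b1%:R + b2%:R.
Proof. by case: b1; case: b2; rewrite ?addr0 ?add0r ?(addrr_pchar2 pchar2_Z2). Qed.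

(* Lets [ring], which knows nothing of the characteristic, prove identities
   in 'Z_2 up to an explicit even term. *)
Lemma Z2_eq_even (x y z : 'Z_2) : x - y = 2 * z -> x = y.
Proof.
by move=> Hxy; apply/eqP; rewrite -subr_eq0 Hxy -mulr_natl (GRing.pcharf0 pchar2_Z2) mul0r.
Qed.

Lemma ltn_flip_Z2 n (i j : 'I_n) : i != j -> ((j < i)%N%:R : 'Z_2) = 1 + (i < j)%N%:R.
Proof.
move=> Hij; case: (ltngtP i j) => H; rewrite ?addr0 ?(addrr_pchar2 pchar2_Z2) //.
by rewrite (val_inj H) eqxx in Hij.
Qed.

Lemma oppv_Z2 n (v : vec n) : - v = v.
Proof. by apply/ffunP => k; rewrite ffunE (oppr_pchar2 pchar2_Z2). Qed.

Lemma pact0 n (w : 'S_n) : pact w 0 = 0.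
Proof. by apply/ffunP => k; rewrite !ffunE. Qed.

Lemma pactK n (w : 'S_n) : cancel (pact w^-1) (pact w).
Proof. by move=> v; apply/ffunP => k; rewrite !ffunE invgK permKV. Qed.

Lemma pactKV n (w : 'S_n) : cancel (pact w) (pact w^-1).
Proof. by move=> v; apply/ffunP => k; rewrite !ffunE invgK permK. Qed.

Lemma hcross0l n (v : vec n) : hcross 0 v = 0.
Proof. by apply: big1 => i _; apply: big1 => j _; rewrite ffunE mul0r. Qed.

Lemma hcross0r n (v : vec n) : hcross v 0 = 0.
Proof. by apply: big1 => i _; apply: big1 => j _; rewrite ffunE mulr0. Qed.

Definition coinversions n (w : 'S_n) (c : vec n) : 'Z_2 :=
  \sum_(i < n) \sum_(j < n) ((i < j)%N && (w i < w j)%N)%:R * (c i * c j).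

Definition inversions n (w : 'S_n) (c : vec n) : 'Z_2 :=
  \sum_(i < n) \sum_(j < n) ((i < j)%N && (w j < w i)%N)%:R * (c i * c j).

Lemma hword_letter n (s : 'S_n) (a : vec n) i :
  (if a i == 0 then hone n else xgen (s i)) = ([ffun k => a i * (k == s i)%:R], 0).
Proof.
case: (Z2_eq01 (a i)) => ->; rewrite ?eqxx //=; congr pair; apply/ffunP => k.
  by rewrite !ffunE mul0r.
by rewrite !ffunE mul1r.
Qed.

Lemma hword_foldrE n (s : 'S_n) (a : vec n) (l : seq 'I_n) :
  sorted (fun i j : 'I_n => (i < j)%N) l ->
  foldr (fun i acc => hmul (if a i == 0 then hone n else xgen (s i)) acc) (hone n) l =
  ([ffun k => \sum_(j <- l) a j * (k == s j)%:R],
   \sum_(i <- l) \sum_(j <- l) ((i < j)%N && (s i < s j)%N)%:R * (a i * a j)).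
Proof.
elim: l => [_|i l IH Hs] /=.
  by rewrite !big_nil; congr pair; apply/ffunP => k; rewrite !ffunE big_nil.
have Hl : sorted (fun i j : 'I_n => (i < j)%N) l by apply: path_sorted Hs.
have Hall : all (fun j : 'I_n => (i < j)%N) l.
  by apply: order_path_min Hs => x y z; apply: ltn_trans.
rewrite IH // hword_letter /hmul /=; congr pair.
  by apply/ffunP => k; rewrite !ffunE big_cons.
rewrite add0r.
set f := fun i' j : 'I_n => ((i' < j)%N && (s i' < s j)%N)%:R * (a i' * a j).
have -> : \sum_(i0 <- i :: l) \sum_(j <- i :: l) f i0 j =
          \sum_(j <- l) f i j + \sum_(i0 <- l) \sum_(j <- l) f i0 j.
  rewrite big_cons big_cons {1}/f ltnn /= mul0r add0r; congr (_ + _).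
  rewrite big_seq [RHS]big_seq; apply: eq_bigr => i' Hi'; rewrite big_cons.
  have H : (i < i')%N by move/allP: Hall => /(_ i' Hi').
  by rewrite {1}/f ltnNge (ltnW H) /= mul0r add0r.
rewrite addrC; congr (_ + _).
rewrite /hcross (bigD1 (s i)) //= [X in _ + X = _]big1 ?addr0; last first.
  move=> p /negbTE Hp; apply: big1 => q _; by rewrite !ffunE Hp mulr0 mul0r.
under eq_bigr do rewrite !ffunE eqxx mulr1 mulr_sumr.
rewrite exchange_big /= [RHS]big_seq_cond [LHS]big_seq_cond.
apply: eq_bigr => j /andP[Hj _]; rewrite /f; move/allP: Hall => /(_ j Hj) -> /=.
under eq_bigr do rewrite mulrA mulrAC.
rewrite big_mkcond (bigD1 (s j)) //= eqxx big1 ?addr0; last first.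
  by move=> q /negbTE ->; case: ifP => _; rewrite ?mulr0 ?mul0r.
by case: ifP => _; rewrite ?mulr1 ?mul1r ?mul0r.
Qed.

Lemma hwordE n (s : 'S_n) (a : vec n) : hword s a = (pact s a, coinversions s a).
Proof.
have sorted_enum : sorted (fun i j : 'I_n => (i < j)%N) (enum 'I_n).
  by have := iota_ltn_sorted 0 n; rewrite -val_enum_ord sorted_map.
rewrite /hword hword_foldrE // enumT; congr pair; apply/ffunP => k; rewrite !ffunE.
rewrite (bigD1 (s^-1 k)%g) //= permKV eqxx mulr1 big1 ?addr0 // => j Hj.
by rewrite (_ : k == s j = false) ?mulr0 //; apply: contraNF Hj => /eqP ->; rewrite permK.
Qed.

Lemma hactE n (s : 'S_n) (h : Hn n) :
  hact s h = (pact s h.1, h.2 - coinversions 1 h.1 + coinversions s h.1).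
Proof. by rewrite /hact !hwordE /hmul /= add0r hcross0l addr0. Qed.

Lemma coinversions0 n (w : 'S_n) : coinversions w 0 = 0.
Proof. by apply: big1 => i _; apply: big1 => j _; rewrite ffunE mul0r mulr0. Qed.

Lemma phi_bperm_coinversions n (s u : 'S_n) (a : vec n) :
  pact s a = a -> commute u s ->
  phi (bperm s) (a, u) = geps n (coinversions s a + coinversions 1 (pact u^-1 a)
                                 + (coinversions u^-1 a + coinversions u (pact u^-1 a))).
Proof.
move=> sa us.
rewrite /phi /gcomm /gmul /ginv /lift /bperm /geps /heps /=.
rewrite !hactE /= /hinv /= !oppv_Z2 !pact0 !coinversions0 /=.
rewrite us mulgA mulVg mul1g mulVg sa /hmul /= pactK !hcross0l !hcross0r.
congr (_, _, _).
  by rewrite add0r addr0; apply/ffunP => k; rewrite !ffunE (addrr_pchar2 pchar2_Z2).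
rewrite !(oppr_pchar2 pchar2_Z2) !add0r !addr0.
by apply: (@Z2_eq_even _ _ (hcross a a + coinversions 1 a)); ring.
Qed.

Lemma sum2_perm (R : nmodType) n (p : 'S_n) (F : 'I_n -> 'I_n -> R) :
  \sum_i \sum_j F (p i) (p j) = \sum_i \sum_j F i j.
Proof.
rewrite [RHS](reindex_inj (@perm_inj _ p)); apply: eq_bigr => i _.
by rewrite [RHS](reindex_inj (@perm_inj _ p)).
Qed.

Lemma sum2_sym_Z2 n (h : 'I_n -> 'I_n -> 'Z_2) :
  (forall i j, h i j = h j i) -> (forall i, h i i = 0) -> \sum_i \sum_j h i j = 0.
Proof.
move=> hC h0.
have hE i j : h i j = (i < j)%N%:R * h i j + (j < i)%N%:R * h i j.
  case: (ltngtP i j) => H; rewrite ?mul1r ?mul0r ?addr0 ?add0r //.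
  by rewrite (val_inj H) h0.
under eq_bigr do under eq_bigr do rewrite hE.
under eq_bigr do rewrite big_split.
rewrite big_split /= [X in _ + X]exchange_big /=.
under [X in _ + X]eq_bigr do under eq_bigr do rewrite hC.
exact: (addrr_pchar2 pchar2_Z2).
Qed.

Lemma sum2_perm_ltn_sym n (w : 'S_n) (g : 'I_n -> 'I_n -> 'Z_2) :
  (forall i j, g i j = g j i) ->
  \sum_(i < n) \sum_(j < n) (w i < w j)%N%:R * g i j =
  \sum_(i < n) \sum_(j < n) (i < j)%N%:R * g i j.
Proof.
move=> gC; apply/eqP; rewrite -subr_eq0 (oppr_pchar2 pchar2_Z2) -big_split /=; apply/eqP.
under eq_bigr do rewrite -big_split /=.
apply: sum2_sym_Z2 => [i j|i]; last by rewrite !ltnn mul0r add0r.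
have [->|Hij] := eqVneq i j; first by [].
have Hw : w i != w j by rewrite (inj_eq (@perm_inj _ w)).
rewrite (ltn_flip_Z2 Hij) (ltn_flip_Z2 Hw) (gC j i).
by apply: (@Z2_eq_even _ _ (- g i j)); ring.
Qed.

Lemma coinversions1_pact n (u : 'S_n) (c : vec n) :
  coinversions 1 (pact u c) = coinversions 1 c.
Proof.
pose F (k l : 'I_n) := (k < l)%N%:R * (pact u c k * pact u c l).
have -> : coinversions 1 (pact u c) = \sum_i \sum_j F i j.
  by apply: eq_bigr => i _; apply: eq_bigr => j _; rewrite !perm1 andbb.
rewrite -(sum2_perm u) /F.
under eq_bigr do under eq_bigr do rewrite !ffunE !permK.
rewrite sum2_perm_ltn_sym => [|i j]; last exact: mulrC.
by apply: eq_bigr => i _; apply: eq_bigr => j _; rewrite !perm1 andbb.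
Qed.

Lemma coinversions_pactV n (u : 'S_n) (c : vec n) :
  coinversions u (pact u^-1 c) = coinversions u^-1 c.
Proof.
pose F (k l : 'I_n) := ((k < l)%N && ((u^-1)%g k < (u^-1)%g l)%N)%:R * (c k * c l).
rewrite /coinversions -[RHS](sum2_perm u F); apply: eq_bigr => i _; apply: eq_bigr => j _.
by rewrite /F !ffunE !invgK !permK andbC.
Qed.

Lemma coinversionsD1 n (s : 'S_n) (c : vec n) :
  coinversions s c + coinversions 1 c = inversions s c.
Proof.
rewrite -big_split; apply: eq_bigr => i _; rewrite -big_split; apply: eq_bigr => j _ /=.
rewrite -mulrDl !perm1 andbb; congr (_ * _).
case: (ltnP i j) => H /=; last by rewrite addr0.
have Hij : i != j by rewrite -(inj_eq val_inj) /= neq_ltn H.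
have Hs : s i != s j by rewrite (inj_eq (@perm_inj _ s)).
by rewrite (ltn_flip_Z2 Hs) addrC.
Qed.

Lemma phi_bperm n (s u : 'S_n) (a : vec n) : pact s a = a -> commute u s ->
  phi (bperm s) (a, u) = geps n (inversions s a).
Proof.
move=> sa us; rewrite phi_bperm_coinversions // coinversions1_pact coinversions_pactV.
by rewrite (addrr_pchar2 pchar2_Z2) addr0 coinversionsD1.
Qed.

Lemma inversionsM n (t p : 'S_n) (c : vec n) :
  inversions (t * p)%g c = inversions t c + inversions p (pact t c).
Proof.
pose c' := pact t c.
pose G (k l : 'I_n) := ((k < l)%N%:R + (p k < p l)%N%:R) * (c' k * c' l).
have GC k l : G k l = G l k.
  have [->|Hkl] := eqVneq k l; first by [].
  have Hp : p k != p l by rewrite (inj_eq (@perm_inj _ p)).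
  rewrite /G (ltn_flip_Z2 Hkl) (ltn_flip_Z2 Hp) [c' l * _]mulrC.
  by apply: (@Z2_eq_even _ _ (- (c' k * c' l))); ring.
have -> : inversions (t * p)%g c =
          inversions t c + \sum_(i < n) \sum_(j < n) (i < j)%N%:R * G (t i) (t j).
  rewrite -big_split; apply: eq_bigr => i _; rewrite -big_split; apply: eq_bigr => j _ /=.
  rewrite /G /c' !ffunE !permK !permM.
  case: (ltnP i j) => H /=; last by rewrite !mul0r add0r.
  have Hij : i != j by rewrite -(inj_eq val_inj) /= neq_ltn H.
  have Ht : t i != t j by rewrite (inj_eq (@perm_inj _ t)).
  have Hp : p (t i) != p (t j) by rewrite (inj_eq (@perm_inj _ p)).
  rewrite (ltn_flip_Z2 Ht) (ltn_flip_Z2 Hp).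
  by apply: (@Z2_eq_even _ _ (- ((t i < t j)%N%:R * (c i * c j)))); ring.
congr (_ + _).
pose F (k l : 'I_n) := ((t^-1)%g k < (t^-1)%g l)%N%:R * G k l.
transitivity (\sum_(i < n) \sum_(j < n) F (t i) (t j)).
  by apply: eq_bigr => i _; apply: eq_bigr => j _; rewrite /F !permK.
rewrite sum2_perm /F sum2_perm_ltn_sym //; apply: eq_bigr => k _; apply: eq_bigr => l _.
rewrite /G mulrA; congr (_ * _).
case: (ltnP k l) => H /=; last by rewrite mul0r.
have Hkl : k != l by rewrite -(inj_eq val_inj) /= neq_ltn H.
have Hp : p k != p l by rewrite (inj_eq (@perm_inj _ p)).
by rewrite mul1r (ltn_flip_Z2 Hp).
Qed.

Lemma inversions1 n (c : vec n) : inversions 1 c = 0.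
Proof.
by apply: big1 => i _; apply: big1 => j _; rewrite !perm1; case: ltngtP; rewrite ?mul0r.
Qed.

Lemma bigD2 (R : nmodType) n (x y : 'I_n) (F : 'I_n -> R) : x != y ->
  \sum_l F l = F x + F y + \sum_(l | (l != x) && (l != y)) F l.
Proof.
move=> Hxy; rewrite (bigD1 x) // (bigD1 y) /=; last by rewrite eq_sym.
by rewrite addrA.
Qed.

(* Only pairs meeting {x, y} can be reversed by tperm x y; those with one
   point z outside {x, y} come in pairs (z, x), (y, z) and (z, y), (x, z) of
   equal weight, so only the pair {x, y} itself survives. *)
Lemma inversions_tperm n (x y : 'I_n) (c : vec n) : x != y -> c x = 1 -> c y = 1 ->
  inversions (tperm x y) c = 1.
Proof.
move=> Hxy cx cy; set t := tperm x y.
pose f (i j : 'I_n) := ((i < j)%N && (t j < t i)%N)%:R * (c i * c j).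
pose out z := (z != x) && (z != y).
have tz z : out z -> t z = z by case/andP=> ? ?; rewrite /t tpermD // eq_sym.
have f_out z w : out z -> out w -> f z w = 0.
  by move=> /tz tzz /tz tww; rewrite /f tzz tww; case: ltngtP; rewrite ?mul0r.
have fzx z : out z -> f z x = f y z.
  by move=> /tz tzz; rewrite /f tzz /t tpermL tpermR cx cy mulr1 mul1r andbC.
have fzy z : out z -> f z y = f x z.
  by move=> /tz tzz; rewrite /f tzz /t tpermL tpermR cx cy mulr1 mul1r andbC.
have fxy : f x y + f y x = 1.
  rewrite /f /t tpermL tpermR cx cy !andbb !mulr1 (ltn_flip_Z2 Hxy).
  by apply: (@Z2_eq_even _ _ (x < y)%N%:R); ring.
have -> : inversions t c = \sum_i \sum_j f i j by [].
under eq_bigr do rewrite (bigD2 (f _) Hxy).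
rewrite !big_split /= (bigD2 (f^~ x) Hxy) (bigD2 (f^~ y) Hxy).
rewrite (bigD2 (fun i => \sum_(l | out l) f i l) Hxy) /=.
have -> : \sum_(z | out z) \sum_(w | out w) f z w = 0.
  by apply: big1 => z oz; apply: big1 => w; exact: f_out.
have fii i : f i i = 0 by rewrite /f ltnn mul0r.
rewrite (eq_bigr (f y) fzx) (eq_bigr (f x) fzy) !fii -fxy.
by apply: (@Z2_eq_even _ _ (\sum_(l | out l) f y l + \sum_(l | out l) f x l)); ring.
Qed.

Lemma pact_perm_on_indic n (S : {set 'I_n}) (p : 'S_n) :
  perm_on S p -> pact p (indic S) = indic S.
Proof.
by move=> pS; apply/ffunP => k; rewrite !ffunE (perm_closed _ (perm_onV pS)).
Qed.

Lemma inversions_perm_on n (S : {set 'I_n}) (p : 'S_n) :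
  perm_on S p -> inversions p (indic S) = (odd_perm p)%:R.
Proof.
have [m] := ubnP #|[pred z | p z != z]|.
elim: m p => // m IH p /ltnSE le_supp_m pS.
case: (pickP (fun z => p z != z)) => [x px | p_id]; last first.
  have -> : p = 1%g by apply/permP => z; apply/eqP; rewrite perm1; apply/idPn; rewrite p_id.
  by rewrite inversions1 odd_perm1.
set w := (p^-1)%g x.
have wx : w != x by apply: contra px => /eqP wx; rewrite -{1}wx /w permKV.
have xS : x \in S by apply: contraR px => /(out_perm pS) ->.
have wS : w \in S by rewrite /w (perm_closed _ (perm_onV pS)).
pose p' := (tperm x w * p)%g.
have Ep : p = (tperm x w * p')%g by rewrite /p' mulgA tperm2 mul1g.
have tS : perm_on S (tperm x w).
  by apply: subset_trans (tperm_on x w) _; rewrite subUset !sub1set xS wS.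
have le_supp'_m : (#|[pred z | p' z != z]| < m)%N.
  rewrite (cardD1 x) !inE px in le_supp_m; apply: leq_ltn_trans le_supp_m.
  apply: subset_leq_card; apply/subsetP=> y.
  rewrite !inE /p' permM permE /= -(canF_eq (permK _)).
  have [-> | yx] := eqVneq y x; first by rewrite permKV eqxx.
  by case: (p y =P x) => // -> _; rewrite eq_sym.
rewrite Ep inversionsM (pact_perm_on_indic tS) (IH p') ?perm_onM //.
by rewrite inversions_tperm 1?eq_sym ?ffunE ?xS ?wS // odd_mul_tperm natr_addb_Z2 eq_sym wx.
Qed.

Section PermOrbits.

Variable T : finType.
Implicit Types (s p : {perm T}) (S : {set T}).

Lemma odd_perm_porbits p : odd_perm p = odd (\sum_(C in porbits p) #|C|.-1).
Proof.
have card_T : (\sum_(C in porbits p) #|C|)%N = #|T|.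
  rewrite -sum1_card (partition_big_imset (porbit p)) /=.
  apply: eq_bigr => C /imsetP[y _ ->].
  by rewrite (eq_bigl (mem (porbit p y))) ?sum1_card // => x; rewrite /= eq_porbit_mem.
have card_pred : (\sum_(C in porbits p) #|C| =
                  \sum_(C in porbits p) #|C|.-1 + #|porbits p|)%N.
  rewrite -sum1_card -big_split /=; apply: eq_bigr => _ /imsetP[x _ ->].
  by rewrite addn1 prednK // lt0n card_porbit_neq0.
by rewrite /odd_perm -card_T card_pred oddD addbK.
Qed.

Lemma porbit_subset s S x : s \in 'N(S | 'P)%g -> (porbit s x \subset S) = (x \in S).
Proof.
move=> sS; apply/subsetP/idP => [/(_ x (porbit_id s x)) // | xS y /porbitP[i ->]].
by rewrite -[_ _ x]/(aperm x (s ^+ i)) (astabs_act _ (groupX i sS)).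
Qed.

Lemma porbit_restr_perm s S x : s \in 'N(S | 'P)%g ->
  porbit (restr_perm S s) x = if x \in S then porbit s x else [set x].
Proof.
move=> sS; have sSi i : (s ^+ i)%g \in 'N(S | 'P)%g by exact: groupX.
have restrX i : (restr_perm S s ^+ i)%g = restr_perm S (s ^+ i) by rewrite morphX.
case: ifP => xS; apply/setP => y.
  by apply/porbitP/porbitP => -[i ->]; exists i; rewrite restrX restr_permE.
rewrite inE; apply/porbitP/eqP => [[i ->] | ->]; last by exists 0%N; rewrite expg0 perm1.
by rewrite restrX (out_perm (restr_perm_on _ _)) ?xS.
Qed.

Lemma sum_porbits_restr_perm s S : s \in 'N(S | 'P)%g ->
  (\sum_(C in porbits (restr_perm S s)) #|C|.-1 =
   \sum_(C in porbits s | C \subset S) #|C|.-1)%N.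
Proof.
move=> sS; rewrite [LHS](bigID (fun C : {set T} => C \subset S)) /=.
rewrite [X in (_ + X)%N]big1 ?addn0 => [|_ /andP[/imsetP[x _ ->]]]; last first.
  by rewrite porbit_restr_perm //; case: ifP => [xS | _ _]; rewrite ?porbit_subset ?xS ?cards1.
apply: eq_bigl => C; apply/andP/andP => -[/imsetP[x _ ->{C}]].
  rewrite porbit_restr_perm //; case: ifP => [_ xsS | xS]; last by rewrite sub1set xS.
  by split; first exact: imset_f.
rewrite porbit_subset // => xS.
have <- : porbit (restr_perm S s) x = porbit s x by rewrite porbit_restr_perm // xS.
by split; first exact: imset_f.
Qed.

End PermOrbits.

Lemma sum_porbits_vscaleE n (s : 'S_n) (l : {set 'I_n} -> 'Z_2) k :
  (\sum_(C in porbits s) vscale (l C) (indic C)) k = l (porbit s k).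
Proof.
rewrite sum_ffunE (bigD1 (porbit s k)) /=; last exact: imset_f.
rewrite !ffunE porbit_id mulr1 big1 ?addr0 // => _ /andP[/imsetP[y _ ->] yk].
by rewrite !ffunE -eq_porbit_mem eq_sym (negbTE yk) mulr0.
Qed.

Definition orbit_value n (v : vec n) (C : {set 'I_n}) : 'Z_2 :=
  if [pick x in C] is Some x then v x else 0.

Lemma orbit_value_porbit n (s : 'S_n) (v : vec n) x :
  pact s v = v -> orbit_value v (porbit s x) = v x.
Proof.
move=> sv; have vs z : v (s z) = v z by rewrite -{1}sv ffunE permK.
have v_porbit y : y \in porbit s x -> v y = v x.
  by case/porbitP=> i ->; elim: i => [|i IH]; rewrite ?expg0 ?perm1 // expgSr permM vs.
by rewrite /orbit_value; case: pickP => [y /v_porbit // | /(_ x)]; rewrite porbit_id.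
Qed.

Lemma sum_porbits_orbit_value n (s : 'S_n) (v : vec n) :
  pact s v = v -> \sum_(C in porbits s) vscale (orbit_value v C) (indic C) = v.
Proof.
by move=> sv; apply/ffunP => k; rewrite sum_porbits_vscaleE orbit_value_porbit.
Qed.

Lemma eq_inversions_indic n (S : {set 'I_n}) (p q : 'S_n) :
  {in S, p =1 q} -> inversions p (indic S) = inversions q (indic S).
Proof.
move=> pq; apply: eq_bigr => i _; apply: eq_bigr => j _; rewrite !ffunE.
case: (boolP (i \in S)) => iS; last by rewrite mulr0n mul0r !mulr0.
case: (boolP (j \in S)) => jS; last by rewrite mulr0n !mulr0.
by rewrite (pq i iS) (pq j jS).
Qed.

Lemma inversions_porbits n (s : 'S_n) (l : {set 'I_n} -> 'Z_2) :
  inversions s (\sum_(C in porbits s) vscale (l C) (indic C)) =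
  \sum_(C in porbits s) l C * (#|C| - 1)%:R.
Proof.
set S := [set x | l (porbit s x) != 0].
have -> : \sum_(C in porbits s) vscale (l C) (indic C) = indic S.
  apply/ffunP => k; rewrite sum_porbits_vscaleE !ffunE inE.
  by case: (Z2_eq01 (l (porbit s k))) => ->.
have sS : s \in 'N(S | 'P)%g.
  by apply/astabsP => x; rewrite !inE /aperm -(porbit_perm s 1 x) expg1.
rewrite -(eq_inversions_indic (fun x => restr_permE sS)) inversions_perm_on ?restr_perm_on //.
rewrite odd_perm_porbits sum_porbits_restr_perm // -natr_Z2 natr_sum.
rewrite [RHS](bigID (fun C : {set 'I_n} => C \subset S)) /=.
rewrite [X in _ = _ + X]big1 ?addr0 => [|_ /andP[/imsetP[x _ ->]]]; last first.
  by rewrite porbit_subset // inE negbK => /eqP ->; rewrite mul0r.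
apply: eq_bigr => _ /andP[/imsetP[x _ ->]].
by rewrite porbit_subset // inE subn1; case: (Z2_eq01 (l (porbit s x))) => -> //; rewrite mul1r.
Qed.

Lemma pactM n (p q : 'S_n) (v : vec n) : pact (p * q) v = pact q (pact p v).
Proof. by apply/ffunP => k; rewrite !ffunE invMg permM. Qed.

Lemma inversions_pact_commute n (s u : 'S_n) (v : vec n) :
  commute u s -> pact s v = v -> inversions s (pact u v) = inversions s v.
Proof.
move=> us sv; have := inversionsM u s v.
by rewrite us inversionsM sv addrC => /addrI.
Qed.

Lemma bmul_bperm_bvec n (p : 'S_n) (w : vec n) : bmul (bperm p) (bvec w) = (pact p w, p).
Proof. by rewrite /bmul /= add0r mul1g. Qed.

Lemma bmul_bperm_commute n (s u : 'S_n) (a : vec n) :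
  bmul (bperm s) (a, u) = bmul (a, u) (bperm s) -> pact s a = a /\ commute u s.
Proof. by rewrite /bmul /= add0r pact0 addr0 => -[-> us]. Qed.

Theorem corollary2p4 (n : nat) (Hn1 : (0 < n)%N) (s : 'S_n) (t : Bn n) :
  bmul (bperm s) t = bmul t (bperm s) ->
  exists (t' : 'S_n) (lam : {set 'I_n} -> 'Z_2),
    [/\ t' \in 'C[s]%g,
        t = bmul (bperm t') (bvec (\sum_(C in porbits s) vscale (lam C) (indic C))),
        (forall (t2 : 'S_n) (lam2 : {set 'I_n} -> 'Z_2),
            t2 \in 'C[s]%g ->
            t = bmul (bperm t2) (bvec (\sum_(C in porbits s) vscale (lam2 C) (indic C))) ->
            t2 = t' /\ {in porbits s, lam2 =1 lam}) &
        phi (bperm s) t = geps n (\sum_(C in porbits s) lam C * (#|C| - 1)%:R)].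
Proof.
case: t => a u /bmul_bperm_commute[sa us].
set v := pact u^-1 a.
have sv : pact s v = v.
  by rewrite -pactM (commute_sym (commuteV (commute_sym us))) pactM sa.
have av : a = pact u v by rewrite pactK.
exists u, (orbit_value v); split.
- exact/cent1P.
- by rewrite sum_porbits_orbit_value // bmul_bperm_bvec -av.
- move=> t2 l2 _; rewrite bmul_bperm_bvec => -[a_eq ut2]; subst t2.
  split=> // _ /imsetP[x _ ->].
  by rewrite orbit_value_porbit // -sum_porbits_vscaleE /v a_eq pactKV.
- by rewrite phi_bperm // av inversions_pact_commute // -{1}(sum_porbits_orbit_value sv)
    inversions_porbits.
Qed.
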